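(* Let $K\subset\mathbb R^n$ be a bounded convex set with nonempty interior such that $0\in K$. Then $$\ell(K)\,L(K^\circ)\ge\frac1{2n}\qquad\text{and}\qquad \ell(K^\circ)\,L(K)\ge\frac1{2n}.$$
   Context: $K^\circ=\{z\in\mathbb R^n: z\cdot x\le1\ \forall x\in K\}$ is the polar body. For a set $E$, $\ell(E)$ is the radius of the largest ball contained in $E$ (inner radius) and $L(E)$ the radius of the smallest ball containing $E$ (outer radius), with $L(E)=\infty$ if $E$ is unbounded. *)

From HB Require Import structures.
From mathcomp Require Import all_boot all_order all_algebra.
From mathcomp Require Import all_classical all_reals ereal.
Set Implicit Arguments. Unset Strict Implicit. Unset Printing Implicit Defensive.
Import Order.TTheory GRing.Theory Num.Theory.
Local Open Scope ring_scope.
Local Open Scope classical_set_scope.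

Section Defs.
Variables (R : realType) (n : nat).
Implicit Types (x y z c : 'rV[R]_n) (E K : set 'rV[R]_n).

Definition dotv x y : R := \sum_(i < n) x 0 i * y 0 i.
Definition enorm x : R := Num.sqrt (dotv x x).

Definition cball c (r : R) : set 'rV[R]_n := [set x | enorm (x - c) <= r].
Definition oball c (r : R) : set 'rV[R]_n := [set x | enorm (x - c) < r].

Definition convex_set K : Prop :=
  forall x y t, K x -> K y -> 0 <= t <= 1 -> K (t *: x + (1 - t) *: y).

Definition bounded_eucl K : Prop := exists M : R, forall x, K x -> enorm x <= M.

Definition nonempty_interior K : Prop :=
  exists c, exists2 r : R, 0 < r & oball c r `<=` K.

Definition polar K : set 'rV[R]_n := [set z | forall x, K x -> dotv z x <= 1].

Definition inradius E : \bar R :=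
  ereal_sup [set r%:E | r in [set r : R | 0 <= r /\ exists c, cball c r `<=` E]].

(* outer radius: inf of radii of balls containing E (= +oo if none, i.e. E unbounded) *)
Definition outradius E : \bar R :=
  ereal_inf [set r%:E | r in [set r : R | 0 <= r /\ exists c, E `<=` cball c r]].

End Defs.

(* If K lies in a ball of radius rho then, since 0 is in K, K lies in the ball
   B(0, 2 rho), so B(0, 1/(2 rho)) lies in the polar; this gives
   inradius(K°) outradius(K) >= 1/2.  If instead K° lies in B(0, 2 rho), every
   point t e_k with |t| < 1/(2 rho) is in K: a point outside K would be
   separated from K by some w of K° with w.(t e_k) >= 1.  Averaging these n
   points shows that K contains B(0, 1/(2 n rho)), whence
   inradius(K) outradius(K°) >= 1/(2n).
   Separation comes from the Minkowski gauge of K about an interior point and a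
   finite-dimensional Hahn-Banach argument: the gauge is lowered one direction
   at a time until it is linear. *)

From mathcomp Require Import all_boot all_order all_algebra.
From mathcomp Require Import all_classical all_reals ereal.
From mathcomp Require Import ring lra.
Import Order.TTheory GRing.Theory Num.Theory.
Local Open Scope ring_scope.
Local Open Scope classical_set_scope.

Set Implicit Arguments. Unset Strict Implicit. Unset Printing Implicit Defensive.

Section Euclidean.
Variables (R : realType) (n : nat).
Local Notation V := 'rV[R]_n.
Implicit Types (x y z : V) (a r : R).

Lemma dotvC x y : dotv x y = dotv y x.
Proof. by apply: eq_bigr => i _; rewrite mulrC. Qed.

Lemma dotvDl x y z : dotv (x + y) z = dotv x z + dotv y z.
Proof. by rewrite /dotv -big_split; apply: eq_bigr => i _; rewrite !mxE mulrDl. Qed.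

Lemma dotvZl a x z : dotv (a *: x) z = a * dotv x z.
Proof. by rewrite /dotv mulr_sumr; apply: eq_bigr => i _; rewrite !mxE mulrA. Qed.

Lemma dotvBl x y z : dotv (x - y) z = dotv x z - dotv y z.
Proof. by rewrite dotvDl -scaleN1r dotvZl mulN1r. Qed.

Lemma dotvDr x y z : dotv z (x + y) = dotv z x + dotv z y.
Proof. by rewrite dotvC dotvDl !(dotvC z). Qed.

Lemma dotvZr a x z : dotv z (a *: x) = a * dotv z x.
Proof. by rewrite dotvC dotvZl dotvC. Qed.

Lemma dotvBr x y z : dotv z (x - y) = dotv z x - dotv z y.
Proof. by rewrite dotvC dotvBl !(dotvC z). Qed.

Lemma dotv0l z : dotv 0 z = 0.
Proof. by rewrite -(scale0r (0 : V)) dotvZl mul0r. Qed.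

Lemma dotvNr x z : dotv z (- x) = - dotv z x.
Proof. by rewrite -scaleN1r dotvZr mulN1r. Qed.

Lemma dotv_ge0 x : 0 <= dotv x x.
Proof. by rewrite /dotv sumr_ge0 // => i _; rewrite -expr2 sqr_ge0. Qed.

Lemma dotv_delta (i : 'I_n) x : dotv 'e_i x = x 0 i.
Proof.
rewrite /dotv (bigD1 i) //= big1 ?addr0; first by rewrite mxE !eqxx mul1r.
by move=> j /negbTE ji; rewrite mxE ji andbF mul0r.
Qed.

Lemma dotv_AMGM x y : 2 * dotv x y <= dotv x x + dotv y y.
Proof. by have := dotv_ge0 (x - y); rewrite dotvBl !dotvBr (dotvC y x); lra. Qed.

Lemma dotvB_le x y : dotv (x - y) (x - y) <= 2 * dotv x x + 2 * dotv y y.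
Proof.
have := dotv_ge0 (x + y).
by rewrite !dotvBl !dotvBr !dotvDl !dotvDr (dotvC y x); lra.
Qed.

Lemma enorm_ge0 x : 0 <= enorm x.
Proof. exact: sqrtr_ge0. Qed.

Lemma enorm_le x r : 0 <= r -> (enorm x <= r) = (dotv x x <= r ^+ 2).
Proof.
by move=> r0; rewrite /enorm -(ler_sqrt (dotv x x)) ?sqr_ge0 // sqrtr_sqr ger0_norm.
Qed.

Lemma enormZ a x : enorm (a *: x) = `|a| * enorm x.
Proof. by rewrite /enorm dotvZl dotvZr mulrA -expr2 sqrtrM ?sqr_ge0 // sqrtr_sqr. Qed.

Lemma enorm_delta (i : 'I_n) : enorm ('e_i : V) = 1.
Proof. by rewrite /enorm dotv_delta mxE !eqxx sqrtr1. Qed.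

Lemma coord_le_enorm x (i : 'I_n) : `|x 0 i| <= enorm x.
Proof.
rewrite /enorm -sqrtr_sqr ler_sqrt ?dotv_ge0 // /dotv (bigD1 i) //= expr2 lerDl.
by rewrite sumr_ge0 // => j _; rewrite -expr2 sqr_ge0.
Qed.

End Euclidean.

Section Balls.
Variables (R : realType) (n : nat).
Local Notation V := 'rV[R]_n.
Implicit Types (x y z c : V) (E K : set V).

Lemma cball_ge0 c r x : cball c r x -> 0 <= r.
Proof. exact/le_trans/enorm_ge0. Qed.

Lemma sub_cball0_of_mem0 E c r : E 0 -> E `<=` cball c r -> E `<=` cball 0 (2 * r).
Proof.
move=> E0 Ec x Ex; have r0 := cball_ge0 (Ec _ E0).
have := Ec _ Ex; have := Ec _ E0; rewrite /cball /= subr0 !enorm_le ?mulr_ge0 //.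
have := dotvB_le (x - c) (0 - c); rewrite opprB addrA subrK subr0.
have -> : (2 * r) ^+ 2 = 4 * r ^+ 2 by ring.
lra.
Qed.

Lemma cball_sub_radius_le c c' s r : (0 < n)%N -> 0 <= s ->
  cball c s `<=` cball c' r -> s <= r.
Proof.
move=> n0 s0 sub; pose e : V := 'e_(Ordinal n0).
have in_cs (t : R) : `|t| = s -> cball c' r (c + t *: e).
  by move=> ts; apply: sub; rewrite /cball /= addrC addKr enormZ enorm_delta ts mulr1.
have r0 := cball_ge0 (in_cs s (ger0_norm s0)).
have ns : `|- s| = s by rewrite normrN ger0_norm.
move: (in_cs s (ger0_norm s0)) (in_cs (- s) ns).
rewrite /cball /= !enorm_le // => hp hm.
have := dotvB_le (c + s *: e - c') (c + - s *: e - c').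
have -> : c + s *: e - c' - (c + - s *: e - c') = (2 * s) *: e.
  by apply/rowP => i; rewrite !mxE; ring.
rewrite dotvZl dotvZr dotv_delta mxE !eqxx mulr1 => h.
rewrite -(ler_pXn2r (n := 2)) ?nnegrE //.
by rewrite !expr2 in hp hm *; nra.
Qed.

Lemma polar0 K : polar K 0.
Proof. by move=> x _; rewrite dotv0l. Qed.

Lemma cball0_sub_polar K r : 0 < r -> K `<=` cball 0 r -> cball 0 r^-1 `<=` polar K.
Proof.
move=> r0 Kr z; have ri0 : 0 <= r^-1 by rewrite invr_ge0 ltW.
rewrite /cball /= subr0 enorm_le // => hz x /Kr.
rewrite /cball /= subr0 (enorm_le _ (ltW r0)) => hx.
have rr : r * r^-1 = 1 by rewrite divff ?gt_eqF.
have key : 2 * dotv z x <= r ^+ 2 * dotv z z + r^-1 ^+ 2 * dotv x x.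
  have := dotv_AMGM (r *: z) (r^-1 *: x); rewrite !(dotvZl, dotvZr).
  by rewrite (mulrA r) rr mul1r !mulrA -!expr2.
have := ler_wpM2l (sqr_ge0 r) hz; have := ler_wpM2l (sqr_ge0 r^-1) hx.
rewrite -!exprMn [r^-1 * r]mulrC rr expr1n; lra.
Qed.

Lemma convex_mean K (I : Type) (f : I -> V) (s : seq I) : convex_set K ->
  (forall i, K (f i)) -> (0 < size s)%N -> K ((size s)%:R^-1 *: \sum_(i <- s) f i).
Proof.
move=> cK Kf; elim: s => // i s IHs _; rewrite big_cons /=.
have [s0|s0] := posnP (size s).
  by rewrite (size0nil s0) big_nil addr0 invr1 scale1r.
have t01 : 0 <= ((size s).+1%:R^-1 : R) <= 1.
  by rewrite invr_ge0 ler0n invf_le1 ?ler1n // ltr0n.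
have := cK _ _ _ (Kf i) (IHs s0) t01.
have m0 : (0 : R) < (size s)%:R by rewrite ltr0n.
congr K; apply/rowP => j; rewrite !mxE -natr1.
by field; rewrite gt_eqF //; lra.
Qed.

End Balls.

Arguments polar0 {R n} K x _.

Section Sublinear.
Variables (R : realType) (n : nat).
Local Notation V := 'rV[R]_n.
Implicit Types (p f : V -> R) (u v w x y : V).

Record sublinear p : Prop := Sublinear {
  sublinD : forall x y, p (x + y) <= p x + p y;
  sublinZ : forall (l : R) x, 0 <= l -> p (l *: x) = l * p x }.

Definition linear_along f v := forall y (s : R), f (y + s *: v) = f y + s * f v.

Lemma sublinear0 p : sublinear p -> p 0 = 0.
Proof. by move=> hp; rewrite -(scale0r 0) sublinZ // mul0r. Qed.

Lemma sublinear_opp p v : sublinear p -> - p v <= p (- v).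
Proof. by move=> hp; have := sublinD hp v (- v); rewrite addrN sublinear0 //; lra. Qed.

Lemma sublinear_scale_ge p (t : R) v : sublinear p -> t * p v <= p (t *: v).
Proof.
move=> hp; have [t0|t0] := leP 0 t; first by rewrite sublinZ.
have nt0 : 0 <= - t by rewrite oppr_ge0 ltW.
rewrite -[t *: v]opprK -scaleNr -scalerN sublinZ // -mulrNN ler_wpM2l //.
exact: sublinear_opp.
Qed.

(* One step of the Hahn-Banach construction: instead of extending a linear
   form, lower [p] to a sublinear functional that is linear along [v]. *)
Definition cut p v x : R := inf (range (fun t : R => p (x - t *: v) + t * p v)).

Section Cut.
Variables (p : V -> R) (v : V).
Hypothesis hp : sublinear p.

Lemma cut_lb x t : - p (- x) <= p (x - t *: v) + t * p v.
Proof.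
have := sublinD hp (- x) (x - t *: v); rewrite addrA addNr add0r.
by have := sublinear_scale_ge (- t) v hp; rewrite scaleNr mulNr; lra.
Qed.

Lemma cut_le x t : cut p v x <= p (x - t *: v) + t * p v.
Proof. by apply: ge_inf; [exists (- p (- x)) => _ [s _ <-]; exact: cut_lb | exists t]. Qed.

Lemma le_cut x m : (forall t, m <= p (x - t *: v) + t * p v) -> m <= cut p v x.
Proof. by move=> hm; apply: lb_le_inf => [|_ [t _ <-]]; [exists (p (x - 0 *: v) + 0 * p v), 0 | exact: hm]. Qed.

Lemma cut_le_self x : cut p v x <= p x.
Proof. by have := cut_le x 0; rewrite scale0r subr0 mul0r addr0. Qed.

Lemma cut0 : cut p v 0 = 0.
Proof.
apply/le_anti; rewrite -{1}(sublinear0 hp) cut_le_self /=.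
by apply: le_cut => t; have := cut_lb 0 t; rewrite oppr0 sublinear0 // oppr0.
Qed.

Lemma cut_subadd x y : cut p v (x + y) <= cut p v x + cut p v y.
Proof.
have H t s : cut p v (x + y) <= (p (x - t *: v) + t * p v) + (p (y - s *: v) + s * p v).
  apply: le_trans (cut_le _ (t + s)) _.
  have -> : x + y - (t + s) *: v = (x - t *: v) + (y - s *: v).
    by apply/rowP => i; rewrite !mxE; ring.
  by have := sublinD hp (x - t *: v) (y - s *: v); lra.
rewrite -lerBlDl; apply: le_cut => s; rewrite lerBlDr -lerBlDl.
by apply: le_cut => t; have := H t s; lra.
Qed.

Lemma cut_homo (l : R) x : 0 <= l -> cut p v (l *: x) = l * cut p v x.
Proof.
rewrite le_eqVlt => /orP [/eqP <-|l0]; first by rewrite scale0r mul0r cut0.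
have l_ge0 := ltW l0.
have scale_shift t : l *: x - t *: v = l *: (x - (l^-1 * t) *: v).
  by rewrite scalerBr scalerA mulrA divff ?gt_eqF // mul1r.
apply/le_anti/andP; split.
  rewrite -ler_pdivrMl //; apply: le_cut => t; rewrite ler_pdivrMl //.
  apply: le_trans (cut_le _ (l * t)) _.
  by rewrite scale_shift mulKf ?gt_eqF // sublinZ // mulrDr mulrA.
apply: le_cut => t; apply: le_trans (ler_wpM2l l_ge0 (cut_le x (l^-1 * t))) _.
by rewrite mulrDr -(sublinZ hp _ l_ge0) -scale_shift !mulrA divff ?gt_eqF // mul1r.
Qed.

Lemma cut_sublinear : sublinear (cut p v).
Proof. by split; [exact: cut_subadd | exact: cut_homo]. Qed.

Lemma cut_shift x s : cut p v (x + s *: v) = cut p v x + s * p v.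
Proof.
apply/le_anti/andP; split.
  rewrite -lerBlDr; apply: le_cut => t; rewrite lerBlDr.
  apply: le_trans (cut_le _ (t + s)) _.
  have -> : x + s *: v - (t + s) *: v = x - t *: v.
    by apply/rowP => i; rewrite !mxE; ring.
  by rewrite mulrDl addrA.
apply: le_cut => t; apply: le_trans (lerD (cut_le x (t - s)) (lexx _)) _.
have -> : x - (t - s) *: v = x + s *: v - t *: v.
  by apply/rowP => i; rewrite !mxE; ring.
by rewrite mulrBl addrA subrK.
Qed.

Lemma cut_dir : cut p v v = p v.
Proof. by have := cut_shift 0 1; rewrite add0r scale1r cut0 mul1r add0r. Qed.

Lemma cut_linear_along : linear_along (cut p v) v.
Proof. by move=> y s; rewrite cut_shift cut_dir. Qed.

Lemma cut_linear_along_keep w : linear_along p w -> linear_along (cut p v) w.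
Proof.
move=> hw; have shift x s : cut p v (x + s *: w) = cut p v x + s * p w.
  apply/le_anti/andP; split.
    rewrite -lerBlDr; apply: le_cut => t; rewrite lerBlDr.
    apply: le_trans (cut_le _ t) _.
    by rewrite addrAC hw; lra.
  apply: le_cut => t; apply: le_trans (lerD (cut_le x t) (lexx _)) _.
  have -> : x - t *: v = (x + s *: w - t *: v) + (- s) *: w.
    by apply/rowP => i; rewrite !mxE; ring.
  by rewrite hw mulNr; lra.
move=> y s; rewrite shift; congr (_ + _ * _).
by have := shift 0 1; rewrite add0r scale1r cut0 mul1r add0r.
Qed.

End Cut.

Definition cuts p (vs : seq V) : V -> R := foldr (fun v f => cut f v) p vs.

Lemma cuts_sublinear p vs : sublinear p -> sublinear (cuts p vs).
Proof. by move=> hp; elim: vs => //= v vs IH; apply: cut_sublinear. Qed.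

Lemma cuts_le p vs x : sublinear p -> cuts p vs x <= p x.
Proof.
move=> hp; elim: vs x => //= v vs IH x.
exact: le_trans (cut_le_self v (cuts_sublinear vs hp) x) (IH x).
Qed.

Lemma cuts_linear_along p vs v : sublinear p -> v \in vs -> linear_along (cuts p vs) v.
Proof.
move=> hp; elim: vs => //= u vs IH; have hc := cuts_sublinear vs hp.
by rewrite inE => /orP [/eqP ->|/IH]; [apply: cut_linear_along | apply: cut_linear_along_keep].
Qed.

Lemma linear_along_basis f x : sublinear f -> (forall i, linear_along f 'e_i) ->
  f x = dotv (\row_i f 'e_i) x.
Proof.
move=> hf hlin; have sum_lin (r : seq 'I_n) :
    f (\sum_(i <- r) x 0 i *: 'e_i) = \sum_(i <- r) x 0 i * f 'e_i.
  elim: r => [|i r IH]; first by rewrite !big_nil sublinear0.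
  by rewrite !big_cons addrC hlin IH addrC.
rewrite {1}(row_sum_delta x) sum_lin; apply: eq_bigr => i _.
by rewrite mxE mulrC.
Qed.

(* Cutting first along [q] and then along every basis vector turns [p] into a
   linear form that is still [p] at [q]. *)
Lemma sublinear_support p q : sublinear p ->
  exists z, (forall x, dotv z x <= p x) /\ p q <= dotv z q.
Proof.
move=> hp; pose g := cut p q; have hg : sublinear g by apply: cut_sublinear.
pose f := cuts g [seq 'e_i | i <- enum 'I_n].
have f_dotv x : f x = dotv (\row_i f 'e_i) x.
  apply: linear_along_basis => [|i]; first exact: cuts_sublinear.
  by apply: cuts_linear_along => //; apply: map_f; rewrite mem_enum.
exists (\row_i f 'e_i); split => [x|]; rewrite -f_dotv.
  exact: le_trans (cuts_le _ _ hg) (cut_le_self q hp x).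
have g_opp : g (- q) = - p q.
  have -> : - q = 0 + (-1) *: q by rewrite add0r scaleN1r.
  by rewrite /g cut_linear_along // cut0 // cut_dir // add0r mulN1r.
have := cuts_le [seq 'e_i | i <- enum 'I_n] (- q) hg.
by rewrite -/f g_opp !f_dotv dotvNr lerN2.
Qed.

End Sublinear.

Section Gauge.
Variables (R : realType) (n : nat) (K : set 'rV[R]_n) (c : 'rV[R]_n) (r : R).
Hypotheses (r0 : 0 < r) (ballK : oball c r `<=` K) (cK : convex_set K).
Local Notation V := 'rV[R]_n.
Implicit Types (x y q : V).

Definition gauge_set x := [set t : R | 0 < t /\ K (c + t^-1 *: x)].
Definition gauge x : R := inf (gauge_set x).

Lemma center_mem : K c.
Proof. by apply: ballK; rewrite /oball /= subrr /enorm dotv0l sqrtr0. Qed.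

Lemma gauge_set0 x : gauge_set x !=set0.
Proof.
have e0 := enorm_ge0 x; exists ((enorm x + 1) / r); split.
  by rewrite divr_gt0 //; lra.
apply: ballK; rewrite /oball /= addrC addKr enormZ invf_div ger0_norm.
  by rewrite mulrAC ltr_pdivrMr ?ltr_pM2l //; lra.
by rewrite divr_ge0 ?ltW //; lra.
Qed.

Lemma gauge_le x t : gauge_set x t -> gauge x <= t.
Proof. by move=> xt; apply: ge_inf => //; exists 0 => s [/ltW]. Qed.

Lemma le_gauge x m : (forall t, gauge_set x t -> m <= t) -> m <= gauge x.
Proof. by move=> hm; apply: lb_le_inf; [apply: gauge_set0 | exact: hm]. Qed.

Lemma gauge_ge0 x : 0 <= gauge x.
Proof. by apply: le_gauge => t [/ltW]. Qed.

Lemma gauge_le1 y : K y -> gauge (y - c) <= 1.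
Proof. by move=> Ky; apply: gauge_le; rewrite /gauge_set /= invr1 scale1r addrC subrK. Qed.

Lemma gauge_ge1 q : ~ K q -> 1 <= gauge (q - c).
Proof.
move=> Kq; rewrite leNgt; apply/negP => /(inf_lt (gauge_set0 _)) [t [t0 Kt] t1].
apply: Kq; have := cK Kt center_mem (t := t); rewrite !ltW //=.
have -> : t *: (c + t^-1 *: (q - c)) + (1 - t) *: c = q.
  by apply/rowP => i; rewrite !mxE; field; rewrite gt_eqF.
by apply.
Qed.

(* [K] is convex, so [c + (t + u)^-1 (x + y)] is a convex combination of
   [c + t^-1 x] and [c + u^-1 y]. *)
Lemma gauge_subadd x y : gauge (x + y) <= gauge x + gauge y.
Proof.
have H t u : gauge_set x t -> gauge_set y u -> gauge (x + y) <= t + u.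
  move=> [t0 Kt] [u0 Ku]; apply: gauge_le; split; first lra.
  have lam : 0 <= t / (t + u) <= 1.
    apply/andP; split; first by rewrite divr_ge0 //; lra.
    by rewrite ler_pdivrMr ?mul1r; lra.
  have := cK Kt Ku lam.
  have -> : t / (t + u) *: (c + t^-1 *: x) + (1 - t / (t + u)) *: (c + u^-1 *: y)
          = c + (t + u)^-1 *: (x + y).
    by apply/rowP => i; rewrite !mxE; field; lra.
  by [].
rewrite -lerBlDl; apply: le_gauge => u yu; rewrite lerBlDr -lerBlDl.
by apply: le_gauge => t xt; have := H t u xt yu; lra.
Qed.

Lemma gauge_homo (l : R) x : 0 <= l -> gauge (l *: x) = l * gauge x.
Proof.
rewrite le_eqVlt => /orP [/eqP <-|l0].
  rewrite mul0r scale0r; apply/le_anti; rewrite gauge_ge0 andbT leNgt.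
  apply/negP => g0; have : gauge 0 <= gauge 0 / 2.
    by apply: gauge_le; split; [rewrite divr_gt0 | rewrite scaler0 addr0; exact: center_mem].
  lra.
apply/le_anti/andP; split.
  rewrite -ler_pdivrMl //; apply: le_gauge => t [t0 Kt].
  rewrite ler_pdivrMl //; apply: gauge_le; split; first by rewrite mulr_gt0.
  by rewrite scalerA invfM mulrAC mulVf ?gt_eqF // mul1r.
apply: le_gauge => t [t0 Kt].
rewrite -ler_pdivlMl //; apply: gauge_le; split; first by rewrite mulr_gt0 // invr_gt0.
by rewrite invfM invrK mulrC; move: Kt; rewrite scalerA.
Qed.

Lemma gauge_sublinear : sublinear gauge.
Proof. by split; [exact: gauge_subadd | exact: gauge_homo]. Qed.

Lemma convex_separation q : ~ K q ->
  exists z, (forall y, K y -> dotv z (y - c) <= 1) /\ 1 <= dotv z (q - c).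
Proof.
move=> Kq; have [z [zle zq]] := sublinear_support (q - c) gauge_sublinear.
exists z; split; first by move=> y Ky; exact: le_trans (zle _) (gauge_le1 Ky).
exact: le_trans (gauge_ge1 Kq) zq.
Qed.

End Gauge.

Section Polar.
Variables (R : realType) (n : nat) (K : set 'rV[R]_n) (c : 'rV[R]_n) (r b : R).
Hypotheses (r0 : 0 < r) (ballK : oball c r `<=` K) (cK : convex_set K).
Hypothesis polarb : polar K `<=` cball 0 b.
Local Notation V := 'rV[R]_n.

Let b_ge0 : 0 <= b := cball_ge0 (polarb (polar0 K)).

Lemma polar_separation q : ~ K q -> exists2 w, polar K w & 1 <= dotv w q.
Proof.
move=> Kq; have [z [zK zq]] := convex_separation r0 ballK cK Kq.
pose a := 1 + dotv z c.
have zKa y : K y -> dotv z y <= a by move/zK; rewrite dotvBr /a; lra.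
have [a0|a0] := ltP 0 a.
  exists (a^-1 *: z); last by rewrite dotvZl ler_pdivlMl // mulr1; move: zq; rewrite dotvBr /a; lra.
  by move=> y Ky; rewrite dotvZl ler_pdivrMl // mulr1; apply: zKa.
(* Otherwise the whole ray through [z] lies in the bounded set [polar K]. *)
have ray (l : R) : 0 <= l -> dotv (l *: z) (l *: z) <= b ^+ 2.
  move=> l0; rewrite -enorm_le // -[l *: z]subr0; apply: polarb => y Ky.
  by rewrite dotvZl; have := ler_wpM2l l0 (zKa y Ky); have := mulr_ge0_le0 l0 a0; lra.
pose D := dotv (q - c) (q - c); pose l := (b ^+ 2 + D) / 2 + 1.
have l0 : 0 <= l by have := dotv_ge0 (q - c); rewrite -/D /l; have := sqr_ge0 b; lra.
have := dotv_AMGM (l *: z) (q - c); rewrite dotvZl -/D.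
have := ray l l0; have := ler_wpM2l l0 zq; rewrite /l; lra.
Qed.

Lemma mem_axis_of_polar (k : 'I_n) (t : R) : `|t| * b < 1 -> K (t *: 'e_k).
Proof.
move=> tb; apply: contrapT => /polar_separation [w /polarb].
rewrite /cball /= subr0 dotvZr dotvC dotv_delta => wb wk.
have := ler_norm (t * w 0 k); rewrite normrM.
by have := ler_wpM2l (normr_ge0 t) (le_trans (coord_le_enorm w k) wb); lra.
Qed.

Lemma cball0_sub_of_polar (s : R) : (0 < n)%N -> 0 <= s -> n%:R * s * b < 1 -> cball 0 s `<=` K.
Proof.
move=> n0 s0 nsb x; rewrite /cball /= subr0 => xs.
have N0 : (n%:R : R) != 0 by rewrite pnatr_eq0 -lt0n.
pose f i := (n%:R * x 0 i) *: ('e_i : V).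
have size_n : size (index_enum 'I_n) = n by rewrite /index_enum unlock -enumT size_enum_ord.
have -> : x = (size (index_enum 'I_n))%:R^-1 *: \sum_(i < n) f i.
  rewrite size_n {1}(row_sum_delta x) scaler_sumr; apply: eq_bigr => i _.
  by rewrite scalerA mulrA mulVf // mul1r.
apply: convex_mean => [//|i|]; last by rewrite size_n.
apply: mem_axis_of_polar; rewrite normrM ger0_norm ?ler0n //.
apply: le_lt_trans nsb; rewrite ler_wpM2r // ler_wpM2l ?ler0n //.
exact: le_trans (coord_le_enorm x i) xs.
Qed.

End Polar.

Section Radii.
Variables (R : realType) (n : nat).
Local Notation V := 'rV[R]_n.
Implicit Types (E F : set V) (x y : V).

Lemma inradius_ge E x (s : R) : 0 <= s -> cball x s `<=` E -> (s%:E <= inradius E)%E.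
Proof. by move=> s0 xE; apply: ereal_sup_ubound; exists s => //; split => //; exists x. Qed.

Lemma inradius_ge_approx E (t : R) : 0 < t ->
  (forall s : R, 0 < s < t -> exists x, cball x s `<=` E) -> (t%:E <= inradius E)%E.
Proof.
move=> t0 balls; have t2 : 0 < t / 2 by rewrite divr_gt0.
have [x xE] : exists x, cball x (t / 2) `<=` E by apply: balls; rewrite t2 /=; lra.
case ha : (inradius E) => [a| |]; last 2 first.
- exact: leey.
- by have := inradius_ge (ltW t2) xE; rewrite ha.
rewrite lee_fin; apply/unstable.ler_ltP => u ut; pose m := Num.max u (t / 2).
have m0 : 0 <= m by rewrite le_max (ltW t2) orbT.
have [y yE] : exists y, cball y m `<=` E.
  by apply: balls; rewrite lt_max t2 orbT /= gt_max ut; lra.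
by have := inradius_ge m0 yE; rewrite ha lee_fin; apply: le_trans; rewrite le_max lexx.
Qed.

Lemma outradius_ge_cball E x (s : R) : (0 < n)%N -> 0 <= s ->
  cball x s `<=` E -> (s%:E <= outradius E)%E.
Proof.
move=> n0 s0 xE; apply: le_ereal_inf_tmp => _ [r [r0 [y Ey]] <-].
by rewrite lee_fin; apply: cball_sub_radius_le n0 s0 (subset_trans xE Ey).
Qed.

(* Either radius may be [+oo]; the balls [cball x a] and [cball y b] keep the
   product away from [0 * +oo]. *)
Lemma inradius_mul_outradius_ge E F x y (a b c : R) : (0 < n)%N ->
  0 < a -> 0 < b -> cball x a `<=` E -> cball y b `<=` F ->
  (forall z (r : R), 0 < r -> F `<=` cball z r -> ((c / r)%:E <= inradius E)%E) ->
  (c%:E <= inradius E * outradius F)%E.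
Proof.
move=> n0 a0 b0 xE yF hc; have aE := inradius_ge (ltW a0) xE.
have bF := outradius_ge_cball n0 (ltW b0) yF.
case ha : (inradius E) aE => [s| |] //; last by rewrite gt0_mulye ?leey // (lt_le_trans _ bF) ?lte_fin.
rewrite lee_fin => as_; have s0 : 0 < s by exact: lt_le_trans as_.
have : ((c / s)%:E <= outradius F)%E.
  apply: le_ereal_inf_tmp => _ [r [r0 [z Fz]] <-]; rewrite lee_fin.
  have r_pos : 0 < r by apply: lt_le_trans b0 (cball_sub_radius_le n0 (ltW b0) (subset_trans yF Fz)).
  have := hc z r r_pos Fz; rewrite ha lee_fin ler_pdivrMr // => crs.
  by rewrite ler_pdivrMr // mulrC.
move=> /(lee_wpmul2l (ltW (s0 : (0 < s%:E)%E))).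
by rewrite -EFinM mulrC divfK ?gt_eqF.
Qed.

End Radii.

Theorem mainTheorem11 (R : realType) (n : nat) (K : set 'rV[R]_n) :
  (0 < n)%N ->
  convex_set K -> bounded_eucl K -> nonempty_interior K -> K 0 ->
  (((2 * n%:R)^-1)%:E <= inradius K * outradius (polar K))%E /\
  (((2 * n%:R)^-1)%:E <= inradius (polar K) * outradius K)%E.
Proof.
move=> n0 cK [M KM] [c [r r0 ballK]] K0.
have M0 : 0 <= M by apply: le_trans (enorm_ge0 _) (KM _ K0).
have K_M : K `<=` cball 0 (M + 1) by move=> x /KM; rewrite /cball /= subr0; lra.
have polar_ball := cball0_sub_polar (ltr_pwDr ltr01 M0) K_M.
have K_ball : cball c (r / 2) `<=` K.
  by move=> x; rewrite /cball /= => xc; apply: ballK; rewrite /oball /=; lra.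
have n1 : 1 <= n%:R :> R by rewrite ler1n.
have Mi0 : 0 < (M + 1)^-1 by rewrite invr_gt0; lra.
split.
  apply: (inradius_mul_outradius_ge n0 _ Mi0 K_ball polar_ball); first by rewrite divr_gt0.
  move=> x rho rho0 /(sub_cball0_of_mem0 (polar0 K)) Krho.
  (* [K] need not be closed: only the radii below [1 / (2 n rho)] are reached. *)
  apply: inradius_ge_approx => [|s /andP [s0 st]]; first by rewrite divr_gt0 // invr_gt0 mulr_gt0 // ltr0n.
  exists 0; apply: cball0_sub_of_polar r0 ballK cK Krho _ n0 (ltW s0) _.
  move: st; rewrite ltr_pdivlMr // -[X in _ < X]mulr1 ltr_pdivlMl; last lra.
  by rewrite !mulrA [_ * s]mulrC; lra.
apply: (inradius_mul_outradius_ge n0 Mi0 _ polar_ball K_ball); first by rewrite divr_gt0.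
move=> x rho rho0 /(sub_cball0_of_mem0 K0) Krho.
have r2 : 0 < 2 * rho by rewrite mulr_gt0.
have r2i : 0 <= (2 * rho)^-1 by rewrite invr_ge0 ltW.
apply: le_trans (inradius_ge r2i (cball0_sub_polar r2 Krho)).
rewrite lee_fin -invfM lef_pV2 ?posrE ?mulr_gt0 //; last lra.
by apply: ler_wpM2r; [exact: ltW | lra].
Qed.
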